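(* Let $v,w,\Delta$ be nonnegative integers with $w\ge1$ and $v+\Delta\le w$. Then for every $0<\lambda\le1$, \[ \varPhi_{v,\Delta}(\lambda)\le\left(\frac{(1+\lambda)^w}{1+\lambda^w}\right)^{v/w}. \]
   Context: For nonnegative integers $v,\Delta$ and $0<\lambda\le 1$, the local factor is \[ \varPhi_{v,\Delta}(\lambda)=\frac{\sum_{t=0}^v\binom vt\lambda^{\min\{t,\,\Delta+v-t\}}}{1+\lambda^{\Delta}}. \] *)

From Stdlib Require Import Reals Lia.
Open Scope R_scope.

(* Local factor Phi_{v,Delta}(lambda) =
   (sum_{t=0}^v C(v,t) lambda^{min(t, Delta+v-t)}) / (1 + lambda^Delta).
   Here Delta + v - t is a natural with t <= v, so truncated subtraction is exact. *)
Definition Phi (v Delta : nat) (lambda : R) : R :=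
  sum_f_R0 (fun t => Binomial.C v t * lambda ^ (Nat.min t (Delta + v - t))) v
  / (1 + lambda ^ Delta).

(* Put θ = v/w.  Each term of the numerator satisfies
   (1 + θ λ^w) λ^min(t, Δ+v-t) <= λ^t + λ^(Δ+v-t), because Δ + v <= w and λ <= 1.
   Summing with weights C(v,t) gives (1 + θ λ^w) Σ <= (1+λ)^v (1+λ^Δ), so
   Φ <= (1+λ)^v / (1 + θ λ^w).  Bernoulli's inequality (1+λ^w)^θ <= 1 + θ λ^w for θ <= 1
   then bounds this by (1+λ)^v / (1+λ^w)^θ, which is the right-hand side. *)
From Stdlib Require Import Reals Lra Lia.
Open Scope R_scope.

Lemma pow_le_pow_le_1 (x : R) (m n : nat) :
  0 <= x <= 1 -> (m <= n)%nat -> x ^ n <= x ^ m.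
Proof.
  intros Hx Hmn.
  replace n with (m + (n - m))%nat by lia.
  rewrite pow_add. rewrite <- (Rmult_1_r (x ^ m)) at 2.
  apply Rmult_le_compat_l; [apply pow_le; lra |].
  rewrite <- (pow1 (n - m)). apply pow_incr. lra.
Qed.

Lemma C_nonneg (n k : nat) : 0 <= Binomial.C n k.
Proof.
  left. apply Rdiv_lt_0_compat; [apply INR_fact_lt_0 |].
  apply Rmult_lt_0_compat; apply INR_fact_lt_0.
Qed.

Lemma Rdiv_le_cross (a b c d : R) :
  0 < b -> 0 < d -> a * d <= c * b -> a / b <= c / d.
Proof.
  intros Hb Hd H. apply Rmult_le_reg_r with (b * d); [nra |].
  replace (a / b * (b * d)) with (a * d) by (field; lra).
  replace (c / d * (b * d)) with (c * b) by (field; lra).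
  exact H.
Qed.

Lemma ln_le_sub_1 (z : R) : 0 < z -> ln z <= z - 1.
Proof. intros Hz. pose proof (exp_ineq1_le (ln z)) as H. rewrite exp_ln in H; lra. Qed.

(* Concavity of ln, via ln z <= z - 1 at z = (1+x)/a and z = 1/a with a = 1 + θx:
   the two right-hand sides, weighted by θ and 1 - θ, sum to 0. *)
Lemma Rpower_1_plus_le (x th : R) :
  0 <= x -> 0 <= th <= 1 -> Rpower (1 + x) th <= 1 + th * x.
Proof.
  intros Hx Hth. set (a := 1 + th * x).
  assert (Ha : 0 < a) by (unfold a; nra).
  assert (Hln_x : ln ((1 + x) / a) <= (1 + x) / a - 1)
    by (apply ln_le_sub_1, Rdiv_lt_0_compat; lra).
  assert (Hln_1 : ln (/ a) <= / a - 1) by (apply ln_le_sub_1, Rinv_0_lt_compat; lra).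
  unfold Rdiv in Hln_x. rewrite ln_mult, ln_Rinv in Hln_x by (try apply Rinv_0_lt_compat; lra).
  rewrite ln_Rinv in Hln_1 by lra.
  assert (Hzero : th * ((1 + x) / a - 1) + (1 - th) * (/ a - 1) = 0)
    by (unfold a in *; field; lra).
  assert (Hconc : th * ln (1 + x) <= ln a).
  { assert (th * (ln (1 + x) + - ln a) <= th * ((1 + x) / a - 1))
      by (apply Rmult_le_compat_l; lra).
    assert ((1 - th) * (- ln a) <= (1 - th) * (/ a - 1))
      by (apply Rmult_le_compat_l; lra).
    nra. }
  unfold Rpower. rewrite <- (exp_ln a) by exact Ha.
  destruct (Rle_lt_or_eq_dec _ _ Hconc) as [Hlt | ->].
  - left. apply exp_increasing, Hlt.
  - right. reflexivity.
Qed.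

Lemma Rpower_div_distr (x y z : R) :
  0 < x -> 0 < y -> Rpower (x / y) z = Rpower x z / Rpower y z.
Proof.
  intros Hx Hy. unfold Rpower, Rdiv.
  rewrite ln_mult, ln_Rinv by (try apply Rinv_0_lt_compat; lra).
  rewrite Rmult_plus_distr_l, exp_plus, Ropp_mult_distr_r_reverse, exp_Ropp.
  reflexivity.
Qed.

Lemma Rpower_pow_ratio (a : R) (v w : nat) :
  0 < a -> (w <> 0)%nat -> Rpower (a ^ w) (INR v / INR w) = a ^ v.
Proof.
  intros Ha Hw.
  assert (HINR : INR w <> 0) by (apply not_0_INR, Hw).
  rewrite <- Rpower_pow, Rpower_mult by exact Ha.
  replace (INR w * (INR v / INR w)) with (INR v) by (field; exact HINR).
  apply Rpower_pow, Ha.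
Qed.

Lemma scaled_pow_mul_le (L th : R) (p q w : nat) :
  0 < L <= 1 -> 0 <= th <= 1 -> (q <= w)%nat -> th * L ^ w * L ^ p <= L ^ q.
Proof.
  intros HL Hth Hqw.
  assert (Hpow : L ^ (w + p) <= L ^ q) by (apply pow_le_pow_le_1; lra || lia).
  assert (Hpos : 0 <= L ^ (w + p)) by (apply pow_le; lra).
  rewrite pow_add in Hpow, Hpos. nra.
Qed.

Lemma pow_min_le (L th : R) (m n w : nat) :
  0 < L <= 1 -> 0 <= th <= 1 -> (m <= w)%nat -> (n <= w)%nat ->
  (1 + th * L ^ w) * L ^ Nat.min m n <= L ^ m + L ^ n.
Proof.
  intros HL Hth Hm Hn.
  destruct (Nat.le_ge_cases m n) as [Hmn | Hnm].
  - rewrite Nat.min_l by exact Hmn.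
    pose proof (scaled_pow_mul_le L th m n w HL Hth Hn). lra.
  - rewrite Nat.min_r by exact Hnm.
    pose proof (scaled_pow_mul_le L th n m w HL Hth Hm). lra.
Qed.

Lemma binomial_sum_pow_reflect (L : R) (v D : nat) :
  sum_f_R0 (fun t => Binomial.C v t * (L ^ t + L ^ (D + v - t))) v
  = (1 + L) ^ v * (1 + L ^ D).
Proof.
  rewrite Rmult_plus_distr_l, Rmult_1_r, Rmult_comm.
  rewrite (Rplus_comm 1 L) at 1.
  rewrite (binomial L 1), (binomial 1 L), scal_sum, <- plus_sum.
  apply sum_eq. intros t Ht.
  replace (D + v - t)%nat with (D + (v - t))%nat by lia.
  rewrite !pow1, pow_add. ring.
Qed.

Lemma Phi_numerator_bound (L th : R) (v w D : nat) :
  0 < L <= 1 -> 0 <= th <= 1 -> (v + D <= w)%nat ->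
  (1 + th * L ^ w) * sum_f_R0 (fun t => Binomial.C v t * L ^ Nat.min t (D + v - t)) v
  <= (1 + L) ^ v * (1 + L ^ D).
Proof.
  intros HL Hth Hvw.
  rewrite <- binomial_sum_pow_reflect, scal_sum.
  apply sum_Rle. intros t Ht.
  rewrite Rmult_assoc, (Rmult_comm (L ^ _)).
  apply Rmult_le_compat_l; [apply C_nonneg |].
  apply pow_min_le; lra || lia.
Qed.

Theorem lemma10 (v w Delta : nat) (lambda : R) :
  (1 <= w)%nat -> (v + Delta <= w)%nat ->
  0 < lambda -> lambda <= 1 ->
  Phi v Delta lambda <=
  Rpower ((1 + lambda) ^ w / (1 + lambda ^ w)) (INR v / INR w).
Proof.
  intros Hw Hvw HL HL1.
  assert (0 < lambda ^ w) by (apply pow_lt; lra).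
  rewrite Rpower_div_distr, Rpower_pow_ratio by (lia || lra || (apply pow_lt; lra)).
  set (th := INR v / INR w).
  assert (Hth : 0 <= th <= 1).
  { assert (0 < INR w) by (apply lt_0_INR; lia).
    assert (INR v <= INR w) by (apply le_INR; lia).
    pose proof (pos_INR v).
    assert (INR w * th = INR v) by (unfold th; field; lra).
    split; nra. }
  pose proof (Rpower_1_plus_le (lambda ^ w) th ltac:(lra) Hth) as Hbern.
  pose proof (Phi_numerator_bound lambda th v w Delta ltac:(lra) Hth Hvw) as Hnum.
  set (S := sum_f_R0 _ v) in Hnum.
  assert (0 <= S).
  { apply cond_pos_sum. intros t. apply Rmult_le_pos; [apply C_nonneg | apply pow_le; lra]. }
  unfold Phi. fold S.
  apply Rdiv_le_cross; [pose proof (pow_lt lambda Delta HL); lra | apply exp_pos |].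
  apply Rle_trans with (S * (1 + th * lambda ^ w)); [apply Rmult_le_compat_l; lra | lra].
Qed.
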